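(* Let $G = (\mathbb{Z}/2\mathbb{Z})^n$, $N = 2^n$, $A \subseteq G$, and $\epsilon \in (0,\tfrac12)$. Suppose that $H \leq G$ is a subgroup which is not $\epsilon$-regular for $A$. Then there is a subgroup $H' \leq H$ such that $|G/H'| \leq 2^{|G/H|}$ and $\mathrm{ind}(A;H') \geq \mathrm{ind}(A;H) + \epsilon^3$.
   Context: For a subgroup $H \leq G$ and $g \in G$, let $A_H^{+g} = \{x \in H : x + g \in A\}$. Define $\mathrm{ind}(A;H) = \frac{1}{N}\sum_{g \in G}\left(|A_H^{+g}|/|H|\right)^2$. An element $g \in G$ is an $\epsilon$-regular value (with respect to $A$ and $H$) if for every nontrivial character $\chi$ of $H$, $\left|\sum_{x \in H} A_H^{+g}(x)\chi(x)\right| \leq \epsilon|H|$, where $A_H^{+g}$ also denotes its indicator function. $H$ is $\epsilon$-regular for $A$ if the number of $g \in G$ which are not $\epsilon$-regular values is at most $\epsilon N$. *)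

From HB Require Import structures.
From mathcomp Require Import all_boot all_order all_algebra all_field.
From mathcomp Require Import boolp.
Set Implicit Arguments. Unset Strict Implicit. Unset Printing Implicit Defensive.
Import Order.TTheory GRing.Theory Num.Theory.
Local Open Scope ring_scope.

Notation G n := ('rV['F_2]_n).

Definition is_subgroup (n : nat) (H : {set G n}) : Prop :=
  0 \in H /\ (forall x y, x \in H -> y \in H -> x - y \in H).

Definition shiftset (n : nat) (A H : {set G n}) (g : G n) : {set G n} :=
  [set x in H | x + g \in A].

Definition ind (n : nat) (A H : {set G n}) : algC :=
  (2 ^ n)%:R^-1 * \sum_(g : G n) ((#|shiftset A H g|)%:R / (#|H|)%:R) ^+ 2.

Definition is_character (n : nat) (H : {set G n}) (chi : G n -> algC) : Prop :=
  (forall x, x \in H -> chi x != 0) /\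
  (forall x y, x \in H -> y \in H -> chi (x + y) = chi x * chi y).

Definition nontrivial_on (n : nat) (H : {set G n}) (chi : G n -> algC) : Prop :=
  exists2 x, x \in H & chi x != 1.

Definition regular_value (n : nat) (eps : algC) (A H : {set G n}) (g : G n) : Prop :=
  forall chi : G n -> algC, is_character H chi -> nontrivial_on H chi ->
    `| \sum_(x in H) (if x \in shiftset A H g then 1 else 0) * chi x | <= eps * (#|H|)%:R.

Definition eps_regular (n : nat) (eps : algC) (A H : {set G n}) : Prop :=
  (#|[set g : G n | ~~ `[< regular_value eps A H g >]]|)%:R <= eps * (2 ^ n)%:R.

(* |G/H| = |G| / |H| (exact division for a subgroup H, by Lagrange) *)
Definition quot_card (n : nat) (H : {set G n}) : nat := (#|[set: G n]| %/ #|H|)%N.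

From HB Require Import structures.
From mathcomp Require Import all_boot all_order all_algebra all_field all_fingroup.
From mathcomp Require Import boolp ring zify.
Set Implicit Arguments. Unset Strict Implicit. Unset Printing Implicit Defensive.
Import Order.TTheory GRing.Theory Num.Theory.
Local Open Scope ring_scope.

(* For every irregular value g pick a nontrivial character chi_g of H whose
   Fourier coefficient on A_H^{+g} exceeds eps |H| in modulus; as characters
   take the values +-1, this property of chi_g is invariant under g |-> g + h
   for h in H.  Greedily adding a character that detects a not yet covered
   irregular value covers a whole new coset of H, so with |G/H| = 2^t the
   k = 2^t - t first choices cover either every irregular value or k |H| >= N/2
   points: at least eps N points in both cases.  The common kernel H' of the
   chosen characters has index at most 2^k in H, hence |G/H'| <= 2^(2^t).
   On a coset g + H the H'-densities average to the H-density of g, and since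
   chi_g is constant on H'-cosets their correlation with chi_g is the Fourier
   coefficient; Cauchy-Schwarz bounds their variance below by
   (coefficient / |H|)^2 > eps^2 at covered g, and by 0 elsewhere.  Averaging
   over g gives ind(A;H') >= ind(A;H) + eps^2 * eps. *)

Lemma double_le_expn2 t : (2 * t <= 2 ^ t)%N.
Proof. by case: t => // t; rewrite expnS leq_pmul2l // ltn_expl. Qed.

Lemma expn2_le_double_sub t : (2 ^ t <= 2 * (2 ^ t - t))%N.
Proof. by have := double_le_expn2 t; move: (2 ^ t)%N => N; lia. Qed.

Lemma expn2_mul_le m t : (m <= 2 ^ t - t)%N -> (2 ^ m * 2 ^ t <= 2 ^ 2 ^ t)%N.
Proof.
rewrite -expnD leq_exp2l //; have := ltn_expl t (isT : (1 < 2)%N).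
by move: (2 ^ t)%N => N; lia.
Qed.

Lemma card_cover_ge (F : numFieldType) (T : finType) (I C : {set T}) (eps : F) (N k : nat) :
    eps < 2^-1 -> eps * N%:R < #|I|%:R -> (N <= 2 * k)%N ->
    (k <= #|C|)%N || (I \subset C) ->
  eps * N%:R <= #|C|%:R.
Proof.
move=> eps_lt_half many_I N_le; case/orP => [k_le|/subset_leq_card I_le]; last first.
  by apply/ltW/(lt_le_trans many_I); rewrite ler_nat.
have [->|N_gt0] := posnP N; first by rewrite mulr0 ler0n.
apply: le_trans (_ : 2^-1 * N%:R <= _); first by rewrite ler_pM2r ?ltr0n // ltW.
by rewrite ler_pdivrMl ?ltr0n // -natrM ler_nat (leq_trans N_le) // leq_mul2l k_le orbT.
Qed.

Section CosetSums.
Variables (V : finZmodType) (R : nmodType).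

Lemma sum_shift_set (H : {set V}) (f : V -> R) :
  \sum_g \sum_(h in H) f (g + h) = (\sum_g f g) *+ #|H|.
Proof.
rewrite exchange_big -sumr_const; apply: eq_bigr => h _.
by rewrite [RHS](reindex_inj (addIr h)).
Qed.

End CosetSums.

Section Variance.
Variables (R : numDomainType) (T : finType) (X : {set T}) (b : T -> R).
Hypothesis b_real : {in X, forall x, b x \is Num.real}.

Let m : R := #|X|%:R.
Let B := \sum_(x in X) b x.

Lemma sqr_sum_le_card_sum_sqr : B ^+ 2 <= m * \sum_(x in X) b x ^+ 2.
Proof.
have : 0 <= \sum_(x in X) (m * b x - B) ^+ 2.
  apply: sumr_ge0 => x xX; rewrite -realEsqr.
  by rewrite rpredB ?rpredM ?realn ?b_real ?rpred_sum.
have -> : \sum_(x in X) (m * b x - B) ^+ 2 =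
    m * (m * \sum_(x in X) b x ^+ 2 - B ^+ 2).
  rewrite (eq_bigr (fun x => m ^+ 2 * b x ^+ 2 - 2 * B * m * b x + B ^+ 2)); last first.
    by move=> x _; ring.
  rewrite big_split sumrB /= sumr_const -!mulr_sumr -/B -mulr_natr /m; ring.
have [X0|Xpos] := posnP #|X|.
  by move=> _; rewrite /B /m X0 (cards0_eq X0) !big_set0 expr0n !mul0r.
by rewrite pmulr_rge0 ?ltr0n // subr_ge0.
Qed.

Lemma sqr_sum_mul_le_var (c : T -> R) :
    {in X, forall x, c x ^+ 2 = 1} -> \sum_(x in X) c x = 0 ->
  (\sum_(x in X) b x * c x) ^+ 2 <= m * \sum_(x in X) b x ^+ 2 - B ^+ 2.
Proof.
move=> c_sqr c_sum0; set t := \sum_(x in X) b x * c x.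
have c_real x : x \in X -> c x \is Num.real by move=> xX; rewrite realEsqr c_sqr.
have t_real : t \is Num.real by apply: rpred_sum => x xX; rewrite rpredM ?b_real ?c_real.
have : 0 <= \sum_(x in X) (m * b x - B - t * c x) ^+ 2.
  apply: sumr_ge0 => x xX; rewrite -realEsqr.
  by rewrite !rpredB ?rpredM ?realn ?b_real ?c_real ?t_real ?rpred_sum.
have sum_c_sqr : \sum_(x in X) c x ^+ 2 = m by rewrite (eq_bigr _ c_sqr) sumr_const.
have -> : \sum_(x in X) (m * b x - B - t * c x) ^+ 2 =
    m * (m * \sum_(x in X) b x ^+ 2 - B ^+ 2 - t ^+ 2).
  rewrite (eq_bigr (fun x => m ^+ 2 * b x ^+ 2 - 2 * B * m * b x
      - 2 * m * t * (b x * c x) + 2 * B * t * c x + t ^+ 2 * c x ^+ 2 + B ^+ 2));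
    last by move=> x _; ring.
  rewrite !big_split /= !sumrN sumr_const -!mulr_sumr c_sum0 sum_c_sqr -/B -/t.
  rewrite -mulr_natr /m; ring.
have [X0|Xpos] := posnP #|X|.
  by move=> _; rewrite /t /B /m X0 (cards0_eq X0) !big_set0 mul0r sub0r expr0n oppr0.
by rewrite pmulr_rge0 ?ltr0n // subr_ge0.
Qed.

End Variance.

Section CosetCover.
Variables (V : finZmodType) (H I : {set V}) (P : V -> V -> bool).
Hypothesis P_shift : forall r g h, r \in I -> h \in H -> P r (g + h) = P r g.
Hypothesis P_self : {in I, forall g, P g g}.

Definition covered (R : seq V) := [set g | has (P^~ g) R].

Lemma greedy_coset_cover k : exists R : seq V,
  [/\ (size R <= k)%N, {subset R <= I} &
      (k * #|H| <= #|covered R|)%N || (I \subset covered R)].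
Proof.
elim: k => [|k [R [sizeR RI covR]]]; first by exists [::]; rewrite mul0n.
have [IR|IRn] := boolP (I \subset covered R).
  by exists R; rewrite leqW // IR orbT.
rewrite (negbTE IRn) orbF in covR; have [g gI gNR] := subsetPn IRn.
exists (g :: R); split => //; first by move=> r; rewrite inE => /predU1P[->|/RI].
pose coset := [set g + h | h in H].
have coset_disjoint : [disjoint coset & covered R].
  rewrite disjoints_subset; apply/subsetP => _ /imsetP[h hH ->].
  rewrite !inE; apply: contra gNR => /hasP[r rR Prgh].
  by rewrite inE; apply/hasP; exists r; rewrite // -(P_shift g (RI r rR) hH).
have coset_covered : coset :|: covered R \subset covered (g :: R).
  apply/subsetP => x; rewrite !inE /= => /orP[/imsetP[h hH ->]|->]; last by rewrite orbT.
  by rewrite P_shift ?P_self.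
apply/orP; left; apply: leq_trans (subset_leq_card coset_covered).
have /eqP -> : #|coset :|: covered R| == (#|coset| + #|covered R|)%N.
  by rewrite (leq_card_setU _ _).2.
by rewrite card_imset ?mulSn ?leq_add2l //; apply: addrI.
Qed.

End CosetCover.

Section BooleanCube.
Variable n : nat.
Implicit Types (x y g : G n) (A H K : {set G n}) (chi : G n -> algC).

Lemma addrr_F2 x : x + x = 0.
Proof. by apply/rowP => i; rewrite !mxE addrr_pchar2 // pchar_Fp. Qed.

Lemma oppr_F2 x : - x = x.
Proof. by apply/eqP; rewrite eq_sym -addr_eq0 addrr_F2. Qed.

Section Subgroup.
Variable H : {set G n}.
Hypothesis sH : is_subgroup H.

Lemma subgroup0 : 0 \in H.
Proof. by case: sH. Qed.

Lemma subgroupD x y : x \in H -> y \in H -> x + y \in H.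
Proof. by case: sH => _ subH xH yH; rewrite -[y]oppr_F2 subH. Qed.

Lemma subgroupDl x y : y \in H -> (x + y \in H) = (x \in H).
Proof.
move=> yH; apply/idP/idP => [xyH|xH]; last exact: subgroupD.
by rewrite -[x]addr0 -(addrr_F2 y) addrA subgroupD.
Qed.

Lemma reindex_subgroupD (R : nmodType) (F : G n -> R) y :
  y \in H -> \sum_(x in H) F x = \sum_(x in H) F (x + y).
Proof.
move=> yH; rewrite big_mkcond [RHS]big_mkcond (reindex_inj (addIr y)) /=.
by apply: eq_bigr => x _; rewrite subgroupDl.
Qed.

Lemma card_subgroup_gt0 : (0 < #|H|)%N.
Proof. by apply/card_gt0P; exists 0; apply: subgroup0. Qed.

Lemma card_subgroup_mul_quot : (#|H| * quot_card H)%N = (2 ^ n)%N.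
Proof.
have gH : group_set H.
  apply/group_setP; split; first exact: subgroup0.
  by move=> x y xH yH; rewrite FinRing.zmodMgE subgroupD.
have := cardSg (subsetT (Group gH)).
rewrite /quot_card cardsT card_mx card_Fp // mul1n => /dvdnP[q ->].
by rewrite mulnK ?card_subgroup_gt0 // mulnC.
Qed.

Lemma quot_card_pow2 : exists t, quot_card H = (2 ^ t)%N.
Proof.
have /(dvdn_pfactor _ _ (isT : prime 2))[t _ ->] : (quot_card H %| 2 ^ n)%N.
  by rewrite -card_subgroup_mul_quot dvdn_mull.
by exists t.
Qed.

End Subgroup.

Section Character.
Variables (H : {set G n}) (chi : G n -> algC).
Hypotheses (sH : is_subgroup H) (cH : is_character H chi).

Lemma character0 : chi 0 = 1.
Proof.
case: cH => chi_neq0 chiD; have H0 := subgroup0 sH.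
by apply: (mulfI (chi_neq0 0 H0)); rewrite -chiD // addr0 mulr1.
Qed.

Lemma character_sqr x : x \in H -> chi x ^+ 2 = 1.
Proof. by case: cH => _ chiD xH; rewrite expr2 -chiD // addrr_F2 character0. Qed.

Lemma character_sign x : x \in H -> chi x = 1 \/ chi x = -1.
Proof. by move/character_sqr/eqP; rewrite sqrf_eq1 => /orP[]/eqP; [left | right]. Qed.

Lemma normr_character x : x \in H -> `|chi x| = 1.
Proof. by case/character_sign => ->; rewrite ?normrN normr1. Qed.

Lemma sum_character_nontrivial : nontrivial_on H chi -> \sum_(x in H) chi x = 0.
Proof.
case: cH => _ chiD [y yH chiy_neq1].
have shift : \sum_(x in H) chi x = chi y * \sum_(x in H) chi x.
  rewrite [LHS](reindex_subgroupD sH _ yH) mulr_sumr.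
  by apply: eq_bigr => x xH; rewrite chiD // mulrC.
have /eqP : (1 - chi y) * \sum_(x in H) chi x = 0 by rewrite mulrBl mul1r -shift subrr.
by rewrite mulf_eq0 subr_eq0 eq_sym (negbTE chiy_neq1) => /eqP.
Qed.

Lemma card_subgroup_le_double_kernel K : is_subgroup K -> K \subset H ->
  (#|K| <= 2 * #|K :&: [set x | chi x == 1%R]|)%N.
Proof.
move=> sK sKH; have [/existsP[y /andP[yK chiy_neq1]]|] := boolP [exists y in K, chi y != 1].
  rewrite -{1}(cardsID [set x | chi x == 1] K) mul2n -addnn leq_add2l.
  rewrite -(card_imset _ (addIr y)); apply: subset_leq_card.
  apply/subsetP => _ /imsetP[x + ->]; rewrite !inE => /andP[chix_neq1 xK].
  have [xH yH] := (subsetP sKH x xK, subsetP sKH y yK).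
  have chi_neg z : z \in H -> chi z != 1 -> chi z = -1.
    by move=> zH; case: (character_sign zH) => ->; rewrite ?eqxx.
  case: cH => _ chiD; rewrite subgroupD //= chiD //.
  by rewrite chi_neg // [chi y]chi_neg // mulrNN mulr1.
rewrite negb_exists => /forallP K_ker.
rewrite (setIidPl _) ?mul2n -?addnn ?leq_addl //; apply/subsetP => x xK.
by rewrite inE; move: (K_ker x); rewrite xK negbK.
Qed.
End Character.

Section CommonKernel.
Variables (I : eqType) (H : {set G n}) (chi : I -> G n -> algC) (R : seq I).

Definition common_kernel := [set x in H | all (fun i => chi i x == 1) R].

Lemma common_kernel_subset : common_kernel \subset H.
Proof. by apply/subsetP => x; rewrite inE => /andP[]. Qed.

Lemma common_kernel_eq1 i x : i \in R -> x \in common_kernel -> chi i x = 1.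
Proof. by move=> iR; rewrite inE => /andP[_ /allP/(_ i iR)/eqP]. Qed.

Hypotheses (sH : is_subgroup H) (chiR : {in R, forall i, is_character H (chi i)}).

Lemma common_kernel_subgroup : is_subgroup common_kernel.
Proof.
split.
  rewrite inE subgroup0 //=; apply/allP => i iR.
  by rewrite (character0 sH (chiR iR)).
move=> x y; rewrite !inE => /andP[xH /allP chix] /andP[yH /allP chiy].
rewrite oppr_F2 subgroupD //=; apply/allP => i iR; case: (chiR iR) => _ chiD.
by rewrite chiD // (eqP (chix i iR)) (eqP (chiy i iR)) mulr1.
Qed.

End CommonKernel.

Lemma card_common_kernel (I : eqType) H (chi : I -> G n -> algC) (R : seq I) :
  is_subgroup H -> {in R, forall i, is_character H (chi i)} ->
  (#|H| <= 2 ^ size R * #|common_kernel H chi R|)%N.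
Proof.
move=> sH; elim: R => [|i R IH] chiR.
  by rewrite mul1n subset_leq_card //; apply/subsetP => x xH; rewrite inE xH.
have chiR' : {in R, forall j, is_character H (chi j)}.
  by move=> j jR; apply: chiR; rewrite inE jR orbT.
have -> : common_kernel H chi (i :: R) =
    common_kernel H chi R :&: [set x | chi i x == 1].
  by apply/setP => x; rewrite !inE /= andbCA andbC.
apply: leq_trans (IH chiR') _; rewrite expnS -mulnA mulnCA leq_pmul2l ?expn_gt0 //.
apply: (card_subgroup_le_double_kernel sH (chiR _ (mem_head _ _))).
  exact: common_kernel_subgroup.
exact: common_kernel_subset.
Qed.

Lemma card_shiftset A H g :
  #|shiftset A H g|%:R = \sum_(x in H) (x + g \in A)%:R :> algC.
Proof.
rewrite -sum1_card natr_sum big_mkcond [RHS]big_mkcond /=.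
by apply: eq_bigr => x _; rewrite inE; case: (x \in H); case: (x + g \in A).
Qed.

(* Literally the sum in [regular_value], so that the two are convertible. *)
Definition fourier_coef A H chi g :=
  \sum_(x in H) (if x \in shiftset A H g then 1 else 0) * chi x.

Lemma fourier_coefE A H chi g :
  fourier_coef A H chi g = \sum_(x in H) (x + g \in A)%:R * chi x.
Proof. by apply: eq_bigr => x xH; rewrite inE xH; case: (x + g \in A). Qed.

Lemma fourier_coef1 A H g : fourier_coef A H (fun=> 1) g = #|shiftset A H g|%:R.
Proof. by rewrite fourier_coefE card_shiftset; under eq_bigr do rewrite mulr1. Qed.

Lemma normr_fourier_coefD A H chi g h : is_subgroup H -> is_character H chi ->
  h \in H -> `|fourier_coef A H chi (g + h)| = `|fourier_coef A H chi g|.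
Proof.
move=> sH cH hH; have [_ chiD] := cH.
have -> : fourier_coef A H chi (g + h) = fourier_coef A H chi g * chi h.
  rewrite !fourier_coefE (reindex_subgroupD sH _ hH) mulr_suml.
  by apply: eq_bigr => x xH; rewrite addrACA addrr_F2 addr0 chiD // mulrA.
by rewrite normrM (normr_character sH cH hH) mulr1.
Qed.

Definition density A H g : algC := #|shiftset A H g|%:R / #|H|%:R.

Lemma density_real A H g : density A H g \is Num.real.
Proof. by rewrite rpredM ?rpredV ?realn. Qed.

Lemma sum_density_mul_character A H H' chi g :
    is_subgroup H -> is_subgroup H' -> H' \subset H ->
    {in H & H', forall h y, chi (h + y) = chi h} ->
  \sum_(h in H) density A H' (g + h) * chi h = fourier_coef A H chi g.
Proof.
move=> sH sH' sH'H chi_inv.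
have H'_neq0 : #|H'|%:R != 0 :> algC by rewrite pnatr_eq0 -lt0n card_subgroup_gt0.
transitivity (#|H'|%:R^-1 * \sum_(h in H) #|shiftset A H' (g + h)|%:R * chi h).
  by rewrite mulr_sumr; apply: eq_bigr => h _; rewrite mulrAC mulrC.
rewrite (eq_bigr (fun h => \sum_(y in H') (y + (g + h) \in A)%:R * chi h)); last first.
  by move=> h _; rewrite card_shiftset mulr_suml.
rewrite exchange_big /= (eq_bigr (fun=> fourier_coef A H chi g)).
  by rewrite sumr_const -[fourier_coef _ _ _ _ *+ _]mulr_natl mulKf.
move=> y yH'; have yH := subsetP sH'H y yH'.
rewrite fourier_coefE (reindex_subgroupD sH _ yH); apply: eq_bigr => h hH.
have -> : y + (g + (h + y)) = h + g by rewrite addrC -!addrA addrr_F2 addr0 addrC.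
by rewrite chi_inv.
Qed.

Definition refinement_gain A H H' g :=
  #|H|%:R^-1 * \sum_(h in H) density A H' (g + h) ^+ 2 - density A H g ^+ 2.

Section RefinementGain.
Variables (A H H' : {set G n}) (g : G n).
Hypotheses (sH : is_subgroup H) (sH' : is_subgroup H') (sH'H : H' \subset H).

Let m : algC := #|H|%:R.
Let d h := density A H' (g + h).

Lemma sum_density_coset : \sum_(h in H) d h = m * density A H g.
Proof.
rewrite (eq_bigr (fun h => d h * 1)) => [|h _]; last by rewrite mulr1.
rewrite sum_density_mul_character // fourier_coef1 /density mulrCA divff ?mulr1 //.
by rewrite pnatr_eq0 -lt0n card_subgroup_gt0.
Qed.

Lemma refinement_gainE :
  refinement_gain A H H' g = (m * \sum_(h in H) d h ^+ 2 - (\sum_(h in H) d h) ^+ 2) / m ^+ 2.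
Proof.
have m_neq0 : m != 0 by rewrite pnatr_eq0 -lt0n card_subgroup_gt0.
by rewrite sum_density_coset /refinement_gain -/m; field.
Qed.

Lemma refinement_gain_ge0 : 0 <= refinement_gain A H H' g.
Proof.
rewrite refinement_gainE divr_ge0 ?exprn_ge0 ?ler0n // subr_ge0.
by apply: sqr_sum_le_card_sum_sqr => h _; apply: density_real.
Qed.

Lemma refinement_gain_ge_fourier_coef chi :
    is_character H chi -> nontrivial_on H chi -> {in H', forall y, chi y = 1} ->
  (`|fourier_coef A H chi g| / m) ^+ 2 <= refinement_gain A H H' g.
Proof.
move=> cH ntH chiH'; have [_ chiD] := cH.
have chi_inv : {in H & H', forall h y, chi (h + y) = chi h}.
  by move=> h y hH yH'; rewrite chiD ?(chiH' y yH') ?mulr1 //; apply: (subsetP sH'H).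
rewrite refinement_gainE expr_div_n ler_wpM2r ?invr_ge0 ?exprn_ge0 ?ler0n //.
rewrite -(sum_density_mul_character _ _ sH sH' sH'H chi_inv) real_normK; last first.
  by apply: rpred_sum => h hH; rewrite rpredM ?density_real // realEsqr (character_sqr sH cH hH).
apply: sqr_sum_mul_le_var => [h _|h hH|]; first exact: density_real.
  exact: character_sqr sH cH h hH.
exact: sum_character_nontrivial sH cH ntH.
Qed.

End RefinementGain.

Lemma sum_refinement_gain A H H' : is_subgroup H ->
  \sum_g refinement_gain A H H' g = (2 ^ n)%:R * (ind A H' - ind A H).
Proof.
move=> sH; have m_neq0 : #|H|%:R != 0 :> algC by rewrite pnatr_eq0 -lt0n card_subgroup_gt0.
rewrite sumrB -mulr_sumr (sum_shift_set H (fun x => density A H' x ^+ 2)).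
rewrite -[(\sum_g _) *+ _]mulr_natl mulKf // /ind /density mulrBr !mulrA divff ?mul1r //.
by rewrite pnatr_eq0 expn_eq0.
Qed.

Definition large_fourier_coef eps A H chi g : bool :=
  eps * #|H|%:R < `|fourier_coef A H chi g|.

Lemma ind_increment A H H' (C : {set G n}) eps :
    is_subgroup H -> is_subgroup H' -> H' \subset H -> 0 <= eps ->
    (forall g, g \in C -> exists2 chi,
       [/\ is_character H chi, nontrivial_on H chi & {in H', forall y, chi y = 1}] &
       large_fourier_coef eps A H chi g) ->
  ind A H + eps ^+ 2 * #|C|%:R / (2 ^ n)%:R <= ind A H'.
Proof.
move=> sH sH' sH'H eps_ge0 largeC.
have m_gt0 : 0 < #|H|%:R :> algC by rewrite ltr0n card_subgroup_gt0.
rewrite -lerBrDl ler_pdivrMr ?ltr0n ?expn_gt0 // [(_ - _) * _]mulrC -sum_refinement_gain //.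
rewrite mulr_natr -sumr_const big_mkcond ler_sum // => g _.
case: ifP => [gC|_]; last exact: refinement_gain_ge0.
have [chi [cH ntH chiH'] large] := largeC g gC.
apply: le_trans (refinement_gain_ge_fourier_coef A g sH sH' sH'H cH ntH chiH').
by rewrite ler_sqr ?nnegrE ?divr_ge0 // ler_pdivlMr // ltW.
Qed.

Definition irregular_values eps A H := [set g : G n | ~~ `[< regular_value eps A H g >]].

Lemma irregular_witnesses eps A H : eps \is Num.real ->
  exists chi_of : G n -> G n -> algC, {in irregular_values eps A H, forall g,
    [/\ is_character H (chi_of g), nontrivial_on H (chi_of g) &
        large_fourier_coef eps A H (chi_of g) g]}.
Proof.
move=> eps_real.
have witness g : exists chi : G n -> algC, g \in irregular_values eps A H ->
    [/\ is_character H chi, nontrivial_on H chi & large_fourier_coef eps A H chi g].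
  have [|_] := boolP (g \in irregular_values eps A H); last by exists (fun=> 1).
  rewrite inE => /asboolPn; apply: contra_notP => none chi cH ntH.
  rewrite real_leNgt ?normr_real ?rpredM ?realn //; apply/negP => large.
  by apply: none; exists chi.
by have [chi_of chiP] := choice witness; exists chi_of.
Qed.

Lemma quot_card_le H H' m : is_subgroup H -> is_subgroup H' ->
  (#|H| <= 2 ^ m * #|H'|)%N -> (quot_card H' <= 2 ^ m * quot_card H)%N.
Proof.
move=> sH sH' le_HH'; rewrite -(leq_pmul2l (card_subgroup_gt0 sH')).
rewrite card_subgroup_mul_quot // -(card_subgroup_mul_quot sH) mulnA.
by rewrite leq_mul2r (mulnC #|H'|) le_HH' orbT.
Qed.

End BooleanCube.

Theorem lemma2p2 (n : nat) (A H : {set 'rV['F_2]_n}) (eps : algC) :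
  0 < eps -> eps < 2^-1 ->
  is_subgroup H -> ~ eps_regular eps A H ->
  exists H' : {set 'rV['F_2]_n},
    [/\ is_subgroup H', H' \subset H,
        (quot_card H' <= 2 ^ quot_card H)%N &
        ind A H + eps ^+ 3 <= ind A H'].
Proof.
move=> eps_gt0 eps_lt_half sH not_regular.
have eps_real : eps \is Num.real by rewrite gtr0_real.
have many_irregular : eps * (2 ^ n)%:R < #|irregular_values eps A H|%:R.
  by rewrite real_ltNge ?rpredM ?realn //; apply/negP.
have [chi_of chiP] := irregular_witnesses A H eps_real.
pose detects r := large_fourier_coef eps A H (chi_of r).
have detects_shift r g h :
    r \in irregular_values eps A H -> h \in H -> detects r (g + h) = detects r g.
  by move=> /chiP[cH _ _] hH; rewrite /detects /large_fourier_coef normr_fourier_coefD.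
have detects_self : {in irregular_values eps A H, forall g, detects g g} by move=> g /chiP[].
have [t quotH] := quot_card_pow2 sH.
have [R [sizeR R_irr covR]] := greedy_coset_cover detects_shift detects_self (2 ^ t - t).
have chiR : {in R, forall r, is_character H (chi_of r)} by move=> r /R_irr/chiP[].
have sH' := common_kernel_subgroup sH chiR.
have sH'H := common_kernel_subset H chi_of R.
exists (common_kernel H chi_of R); split => //.
  apply: leq_trans (quot_card_le sH sH' (card_common_kernel sH chiR)) _.
  by rewrite quotH expn2_mul_le.
have covered_ge : eps * (2 ^ n)%:R <= #|covered detects R|%:R.
  apply: card_cover_ge eps_lt_half many_irregular _ covR.
  rewrite -(card_subgroup_mul_quot sH) quotH mulnA mulnC leq_mul2r.
  by rewrite expn2_le_double_sub orbT.
apply: le_trans (ind_increment sH sH' sH'H (ltW eps_gt0) (C := covered detects R) _).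
  rewrite lerD2l exprSr -mulrA ler_wpM2l ?exprn_ge0 ?(ltW eps_gt0) //.
  by rewrite ler_pdivlMr ?ltr0n ?expn_gt0.
move=> g; rewrite inE => /hasP[r rR large]; have [cH ntH _] := chiP r (R_irr r rR).
by exists (chi_of r) => //; split=> // y; apply: common_kernel_eq1.
Qed.
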